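(* Let $(E,C)$ be a configuration structure. Then $C$ is closed under finitely compatible unions iff it is closed under bounded unions and under directed unions. Moreover, $C$ is coherent iff it is closed under bounded unions and weakly coherent.
   Context: $C\subseteq\mathcal{P}(E)$. A set $X$ is consistent if $X\subseteq z$ for some $z\in C$. Closed under bounded unions: $A\subseteq C$ with $\bigcup A$ consistent implies $\bigcup A\in C$. Closed under directed unions: every nonempty $A\subseteq C$ such that any $x,y\in A$ have $z\in A$ with $x\cup y\subseteq z$ satisfies $\bigcup A\in C$. Closed under finitely compatible unions: $A\subseteq C$ with $\bigcup F$ consistent for every finite $F\subseteq A$ implies $\bigcup A\in C$. Coherent: $A\subseteq C$ with $x\cup y$ consistent for all $x,y\in A$ implies $\bigcup A\in C$. Weakly coherent: every $A\subseteq C$ such that all $x,y\in A$ have $z\in C$ with $x\cup y\subseteq z\subseteq\bigcup A$ satisfies $\bigcup A\in C$. *)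

From mathcomp Require Import all_boot.
From mathcomp Require Import boolp classical_sets cardinality.
Set Implicit Arguments. Unset Strict Implicit. Unset Printing Implicit Defensive.
Local Open Scope classical_set_scope.

(* A configuration structure (E, C): a type of events E and a family C of
   subsets of E (no further axioms). *)

Definition Union (E : Type) (A : set (set E)) : set E := \bigcup_(x in A) x.

Definition consistent (E : Type) (C : set (set E)) (X : set E) : Prop :=
  exists2 z, C z & X `<=` z.

Definition closed_bounded_unions (E : Type) (C : set (set E)) : Prop :=
  forall A : set (set E), A `<=` C -> consistent C (Union A) -> C (Union A).

Definition closed_directed_unions (E : Type) (C : set (set E)) : Prop :=
  forall A : set (set E), A `<=` C -> A !=set0 ->
    (forall x y, A x -> A y -> exists2 z, A z & x `|` y `<=` z) ->
    C (Union A).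

Definition closed_fin_compat_unions (E : Type) (C : set (set E)) : Prop :=
  forall A : set (set E), A `<=` C ->
    (forall F : set (set E), finite_set F -> F `<=` A -> consistent C (Union F)) ->
    C (Union A).

Definition coherent (E : Type) (C : set (set E)) : Prop :=
  forall A : set (set E), A `<=` C ->
    (forall x y, A x -> A y -> consistent C (x `|` y)) ->
    C (Union A).

Definition weakly_coherent (E : Type) (C : set (set E)) : Prop :=
  forall A : set (set E), A `<=` C ->
    (forall x y, A x -> A y -> exists2 z, C z & x `|` y `<=` z /\ z `<=` Union A) ->
    C (Union A).

(** Closure under finitely compatible unions splits into two cases: a bounded
   family is finitely compatible, a directed one is too since each finite
   subfamily lies below one member; conversely, the unions of the finite
   subfamilies of a finitely compatible family are in [C] by bounded unions,
   form a directed family with the same union, and directed unions finish.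
   The coherence statement is the pairwise analogue, where the witness
   required by weak coherence for [x, y] is [x `|` y] itself, in [C] as a
   bounded union. *)

From mathcomp Require Import all_boot.
From mathcomp Require Import boolp classical_sets cardinality.

Set Implicit Arguments. Unset Strict Implicit. Unset Printing Implicit Defensive.
Local Open Scope classical_set_scope.

Section Unions.
Variable E : Type.
Implicit Types (A F C : set (set E)) (X Y x y : set E).

Definition directed A :=
  forall x y, A x -> A y -> exists2 z, A z & x `|` y `<=` z.

Definition finite_subunions A :=
  [set Union F | F in [set F | finite_set F /\ F `<=` A]].

Lemma sub_Union A x : A x -> x `<=` Union A.
Proof. exact: bigcup_sup. Qed.

Lemma Union_sub A X : (forall x, A x -> x `<=` X) -> Union A `<=` X.
Proof. exact: bigcup_sub. Qed.

Lemma Union_set1 x : Union [set x] = x.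
Proof. exact: bigcup_set1. Qed.

Lemma Union_set2 x y : Union [set x; y] = x `|` y.
Proof. by rewrite /Union bigcup_setU1 -/(Union [set y]) Union_set1. Qed.

Lemma consistent_subset C X Y : X `<=` Y -> consistent C Y -> consistent C X.
Proof. by move=> XY [z Cz Yz]; exists z => //; apply: subset_trans Yz. Qed.

Lemma directed_seq_ub A (s : seq (set E)) : A !=set0 -> directed A ->
  (forall x, x \in s -> A x) -> exists2 w, A w & forall x, x \in s -> x `<=` w.
Proof.
move=> [a Aa] dirA; elim: s => [|h t IH] sA; first by exists a.
have [w Aw tw] : exists2 w, A w & forall x, x \in t -> x `<=` w.
  by apply: IH => x xt; apply: sA; rewrite in_cons xt orbT.
have [z Az hwz] := dirA h w (sA h (mem_head h t)) Aw.
exists z => // x; rewrite in_cons => /predU1P [->|xt].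
  by apply: subset_trans hwz; apply: subsetUl.
by apply: subset_trans (tw x xt) _; apply: subset_trans hwz; apply: subsetUr.
Qed.

Lemma directed_finite_ub A F : A !=set0 -> directed A ->
  finite_set F -> F `<=` A -> exists2 w, A w & Union F `<=` w.
Proof.
move=> A0 dirA /finite_fsetP [X ->] XA.
have [w Aw Xw] := directed_seq_ub A0 dirA (fun x xX => XA x xX).
by exists w => //; apply: Union_sub => x; apply: Xw.
Qed.

Lemma finite_subunions_directed A : directed (finite_subunions A).
Proof.
move=> _ _ [F [Ffin FA] <-] [G [Gfin GA] <-].
exists (Union (F `|` G)); last by rewrite /Union bigcup_setU.
exists (F `|` G) => //; split; first by rewrite finite_setU.
by rewrite subUset.
Qed.

Lemma finite_subunions_neq0 A : finite_subunions A !=set0.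
Proof. by exists (Union set0), set0; split => //; apply: finite_set0. Qed.

Lemma Union_finite_subunions A : Union (finite_subunions A) = Union A.
Proof.
apply/seteqP; split.
  by apply: Union_sub => _ [F [_ FA] <-]; apply: bigcup_subset.
apply: Union_sub => x Ax; rewrite -{1}(Union_set1 x).
apply: sub_Union; exists [set x] => //; split; first exact: finite_set1.
by move=> y ->.
Qed.

Lemma fin_compat_closed_bounded C :
  closed_fin_compat_unions C -> closed_bounded_unions C.
Proof.
move=> finC A AC bA; apply: finC => // F _ FA.
by apply: consistent_subset bA; apply: bigcup_subset.
Qed.

Lemma fin_compat_closed_directed C :
  closed_fin_compat_unions C -> closed_directed_unions C.
Proof.
move=> finC A AC A0 dirA; apply: finC => // F Ffin FA.
by have [w /AC Cw Fw] := directed_finite_ub A0 dirA Ffin FA; exists w.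
Qed.

Lemma bounded_directed_fin_compat C :
  closed_bounded_unions C -> closed_directed_unions C ->
  closed_fin_compat_unions C.
Proof.
move=> bC dC A AC finA; rewrite -Union_finite_subunions.
apply: dC; [|exact: finite_subunions_neq0|exact: finite_subunions_directed].
move=> _ [F [Ffin FA] <-]; apply: bC (finA F Ffin FA).
exact: subset_trans AC.
Qed.

Lemma coherent_closed_bounded C : coherent C -> closed_bounded_unions C.
Proof.
move=> cohC A AC bA; apply: cohC => // x y Ax Ay.
by apply: consistent_subset bA; rewrite subUset; split; apply: sub_Union.
Qed.

Lemma coherent_weakly_coherent C : coherent C -> weakly_coherent C.
Proof.
move=> cohC A AC wA; apply: cohC => // x y Ax Ay.
by have [z Cz [xyz _]] := wA x y Ax Ay; exists z.
Qed.

Lemma bounded_weakly_coherent_coherent C :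
  closed_bounded_unions C -> weakly_coherent C -> coherent C.
Proof.
move=> bC wC A AC cA; apply: wC => // x y Ax Ay.
exists (x `|` y); last by split=> //; rewrite subUset; split; apply: sub_Union.
rewrite -Union_set2; apply: bC; last by rewrite Union_set2; apply: cA.
by move=> u [->|->]; apply: AC.
Qed.

End Unions.

Theorem mainTheorem15 (E : Type) (C : set (set E)) :
  (closed_fin_compat_unions C <->
     closed_bounded_unions C /\ closed_directed_unions C) /\
  (coherent C <-> closed_bounded_unions C /\ weakly_coherent C).
Proof.
split; split.
- by move=> finC; split;
    [exact: fin_compat_closed_bounded | exact: fin_compat_closed_directed].
- by move=> [bC dC]; exact: bounded_directed_fin_compat.
- by move=> cohC; split;
    [exact: coherent_closed_bounded | exact: coherent_weakly_coherent].
- by move=> [bC wC]; exact: bounded_weakly_coherent_coherent.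
Qed.
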